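(* Let $q\ge 2$ and let $A_1$ be the distance-1 adjacency matrix of the Hamming scheme $H(3,q)$. Then there exist constants $\alpha,\beta$ with $A_1^3=\beta A_1+\alpha(J-A_1)$ if and only if $q=3$. Moreover, for $q=3$, with $A_i$ the distance-$i$ adjacency matrices of $H(3,3)$, $$A_1^3=15A_1+6(J-A_1),\quad A_2^3=69A_2+60(J-A_2),\quad (A_3+I)^3=33(A_3+I)+24(J-A_3-I),$$ so each of $A_1$, $A_2$, $A_3+I$ is the incidence matrix of a symmetric partial geometric design.
   Context: The Hamming scheme $H(d,q)$ has vertex set $S^d$ for a $q$-element set $S$, with $(\mathbf x,\mathbf y)\in R_i$ iff the Hamming distance $\delta(\mathbf x,\mathbf y)=|\{j: x_j\neq y_j\}|$ equals $i$; $A_i$ is the adjacency matrix of $R_i$, $J$ the all-ones matrix. A symmetric partial geometric design with parameters $(v,k;\alpha,\beta)$ is a design with $v$ points, $v$ blocks, block size and replication $k$, whose incidence matrix $N$ satisfies $NN^TN=\beta N+\alpha(J-N)$. *)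

From HB Require Import structures.
From mathcomp Require Import all_boot all_order all_algebra.
Set Implicit Arguments. Unset Strict Implicit. Unset Printing Implicit Defensive.
Import Order.TTheory GRing.Theory Num.Theory.
Local Open Scope ring_scope.

Definition hvert (d q : nat) : finType := {ffun 'I_d -> 'I_q}.

Definition hdist (d q : nat) (x y : hvert d q) : nat := #|[set j | x j != y j]|.

Definition hamA (d q i : nat) : 'M[rat]_#|hvert d q| :=
  \matrix_(a, b) ((hdist (enum_val a) (enum_val b) == i)%:R).

Definition Jmx (n : nat) : 'M[rat]_n := const_mx 1.

Definition sym_pgd (n : nat) (N : 'M[rat]_n) (k : nat) (alpha beta : rat) : Prop :=
  [/\ forall i j, N i j = 0 \/ N i j = 1,
      forall i, \sum_j N i j = k%:R,
      forall j, \sum_i N i j = k%:R &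
      N *m N^T *m N = beta *: N + alpha *: (Jmx n - N)].

(* For arbitrary q, the entries of A_1^3 at a pair (x, x) and at an antipodal
   pair (x, y) count the closed 3-walks at x and the 3-walks from x to y:
   3(q-1)(q-2) and 3! = 6.  Both pairs lie outside R_1, so an identity
   A_1^3 = beta A_1 + alpha (J - A_1) makes both numbers equal to alpha, whence
   q(q-3) = 0.  The walks are counted coordinatewise: the indicator of
   distance 1 is a sum, over the coordinate that changes, of products of
   coordinate indicators, so each walk count factors over the coordinates.
   For q = 3 the identities and the design parameters are checked by
   evaluating all entries on the 27 vertices. *)

From HB Require Import structures.
From mathcomp Require Import all_boot all_order all_algebra.
From mathcomp Require Import ring.

Set Implicit Arguments.
Unset Strict Implicit.
Unset Printing Implicit Defensive.
Import GRing.Theory Num.Theory.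
Local Open Scope ring_scope.

Lemma prodr_bool (R : comPzSemiRingType) (I : finType) (F : I -> bool) :
  \prod_(k : I) (F k)%:R = [forall k, F k]%:R :> R.
Proof.
have [/forallP Ftrue | /forallPn [k Fk]] := boolP [forall k, F k].
  by rewrite big1 // => k _; rewrite Ftrue.
by rewrite (bigD1 k) //= (negbTE Fk) mul0r.
Qed.

Lemma sum_mul3_distr (R : comPzSemiRingType) (T : finType) n
    (a : 'I_n -> T -> R) (b : 'I_n -> T -> T -> R) (c : 'I_n -> T -> R) :
  \sum_(z : T) (\sum_(x : T) (\sum_(j < n) a j x) * (\sum_(j < n) b j x z))
      * (\sum_(j < n) c j z)
  = \sum_(j1 < n) \sum_(j2 < n) \sum_(j3 < n) \sum_(z : T) \sum_(x : T)
      a j1 x * b j2 x z * c j3 z.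
Proof.
transitivity (\sum_(z : T) \sum_(x : T) \sum_(j1 < n) \sum_(j2 < n) \sum_(j3 < n)
                a j1 x * b j2 x z * c j3 z).
  apply: eq_bigr => z _; rewrite mulr_suml; apply: eq_bigr => x _.
  rewrite big_distrlr mulr_suml; apply: eq_bigr => j1 _.
  by rewrite mulr_suml; apply: eq_bigr => j2 _; rewrite mulr_sumr.
under eq_bigr => z _ do rewrite exchange_big.
rewrite exchange_big; apply: eq_bigr => j1 _.
under eq_bigr => z _ do rewrite exchange_big.
rewrite exchange_big; apply: eq_bigr => j2 _.
under eq_bigr => z _ do rewrite exchange_big.
by rewrite exchange_big.
Qed.

(* The sum of G (u == z) over the u in a Q-letter alphabet with (a == u) = e,
   expressed through w = (a == z). *)
Definition coord_step (R : pzRingType) (Q : R) (e : bool) (G : bool -> R) (w : bool) : R :=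
  if e then G w else G true + (Q - 1) * G false - G w.

Lemma sum_coord_step (R : pzRingType) q (a z : 'I_q) (e : bool) (G : bool -> R) :
  \sum_(u < q) ((a == u) == e)%:R * G (u == z) = coord_step q%:R e G (a == z).
Proof.
have sum_at (p : 'I_q) (F : 'I_q -> R) : \sum_(u < q) (u == p)%:R * F u = F p.
  rewrite (bigD1 p) //= eqxx mul1r big1 ?addr0 // => u /negbTE ->.
  by rewrite mul0r.
have sumG : \sum_(u < q) G (u == z) = G true + (q%:R - 1) * G false.
  rewrite (bigD1 z) //= eqxx; congr (_ + _).
  rewrite (eq_bigr (fun _ => G false)); last by move=> u /negbTE ->.
  rewrite sumr_const cardC1 card_ord -subn1 -[_ *+ _]mulr_natl natrB //.
  exact: leq_ltn_trans (leq0n z) (ltn_ord z).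
rewrite /coord_step; case: e.
  by under eq_bigr => u _ do rewrite eqb_id (eq_sym a); rewrite sum_at.
have neq_a u : ((a == u) == false)%:R = 1 - (u == a)%:R :> R.
  by rewrite (eq_sym a); case: (u == a); rewrite ?subrr ?subr0.
under eq_bigr => u _ do rewrite neq_a mulrBl mul1r.
by rewrite sumrB sumG sum_at.
Qed.

Section Walks.
Variables (d q : nat) (R : comPzRingType).
Local Notation V := (hvert d q).

Lemma sum_enum_val (F : V -> R) :
  \sum_(k < #|V|) F (enum_val k) = \sum_(x : V) F x.
Proof. by rewrite -big_enum_val. Qed.

Lemma mulmx3E (f : V -> V -> R) (M : 'M[R]_#|V|) :
  (forall a b, M a b = f (enum_val a) (enum_val b)) ->
  forall a b, (M *m M *m M) a b =
    \sum_(z : V) (\sum_(c : V) f (enum_val a) c * f c z) * f z (enum_val b).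
Proof.
move=> Mf a b; rewrite mxE -sum_enum_val; apply: eq_bigr => z _.
rewrite mxE Mf -sum_enum_val; congr (_ * _); apply: eq_bigr => c _.
by rewrite !Mf.
Qed.

Lemma hdist_eq1_sum_prod (x c : V) :
  (hdist x c == 1)%:R = \sum_(j < d) \prod_(k < d) ((x k == c k) == (j != k))%:R :> R.
Proof.
set D := [set k | x k != c k].
have diff_only j : [forall k, (x k == c k) == (j != k)] = (D == [set j]).
  apply/forallP/eqP => [same | /setP DE k].
    by apply/setP => k; rewrite !inE; move/eqP: (same k) => ->; rewrite negbK eq_sym.
  by move: (DE k); rewrite !inE => Dk; apply/eqP; rewrite -(negbK (x k == c k)) Dk eq_sym.
under eq_bigr => j _ do rewrite prodr_bool diff_only.
rewrite /hdist -/D; have [[j0 ->] | notD1] := @cards1P _ D.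
  rewrite (bigD1 j0) //= eqxx big1 ?addr0 // => j.
  by rewrite (inj_eq set1_inj) eq_sym => /negbTE ->.
by rewrite big1 // => j _; case: eqP => // DE; case: notD1; exists j.
Qed.

Lemma sum_prod_coord (F : 'I_d -> 'I_q -> R) :
  \sum_(x : V) \prod_(k < d) F k (x k) = \prod_(k < d) \sum_(u < q) F k u.
Proof. by rewrite bigA_distr_bigA. Qed.

Lemma walks3_hdist1 (x y : V) :
  \sum_(z : V) (\sum_(c : V) (hdist x c == 1)%:R * (hdist c z == 1)%:R)
      * (hdist z y == 1)%:R
  = \sum_(j1 < d) \sum_(j2 < d) \sum_(j3 < d) \prod_(k < d)
      coord_step q%:R (j1 != k)
        (coord_step q%:R (j2 != k) (fun w => (w == (j3 != k))%:R)) (x k == y k)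
  :> R.
Proof.
under eq_bigr => z _ do
  (under eq_bigr => c _ do rewrite !hdist_eq1_sum_prod; rewrite hdist_eq1_sum_prod).
rewrite sum_mul3_distr; apply: eq_bigr => j1 _; apply: eq_bigr => j2 _.
apply: eq_bigr => j3 _.
under eq_bigr => z _ do (under eq_bigr => c _ do rewrite -!big_split /=).
pose step (k e : 'I_d) (u v : 'I_q) : R := ((u == v) == (e != k))%:R.
under eq_bigr => z _ do
  rewrite (sum_prod_coord (fun k u => step k j1 (x k) u * step k j2 u (z k)
                                      * step k j3 (z k) (y k))).
rewrite (sum_prod_coord (fun k v => \sum_(u < q) step k j1 (x k) u * step k j2 u v
                                                * step k j3 v (y k))).
apply: eq_bigr => k _; rewrite exchange_big -sum_coord_step; apply: eq_bigr => u _.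
by rewrite -sum_coord_step mulr_sumr; apply: eq_bigr => v _; rewrite mulrA.
Qed.

End Walks.

Lemma hamA31_cube_const q (a b : 'I_#|hvert 3 q|) (w : bool) :
  (forall k, (enum_val a k == enum_val b k) = w) ->
  (hamA 3 q 1 *m hamA 3 q 1 *m hamA 3 q 1) a b
  = if w then 3 * (q%:R - 1) * (q%:R - 2) else 6.
Proof.
move=> abw; rewrite (@mulmx3E 3 q rat (fun x y => (hdist x y == 1)%:R)); last first.
  by move=> ? ?; rewrite mxE.
rewrite walks3_hdist1 !big_ord_recl !big_ord0 !abw /coord_step /=.
by case: (w); rewrite /= ?(mul0r, mulr0, mul1r, mulr1, addr0, add0r, subr0); ring.
Qed.

Lemma hamA31_cube_pgd_q3 q : (2 <= q)%N ->
  (exists alpha beta : rat,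
      hamA 3 q 1 *m hamA 3 q 1 *m hamA 3 q 1
      = beta *: hamA 3 q 1 + alpha *: (Jmx _ - hamA 3 q 1)) ->
  q = 3%N.
Proof.
move=> q_ge2 [al [be cubeA]].
have q_gt0 : (0 < q)%N := ltnW q_ge2.
pose x : hvert 3 q := [ffun=> Ordinal q_gt0].
pose y : hvert 3 q := [ffun=> Ordinal q_ge2].
have entry_al u v : (hdist u v != 1)%N ->
    (hamA 3 q 1 *m hamA 3 q 1 *m hamA 3 q 1) (enum_rank u) (enum_rank v) = al.
  by move=> uv; rewrite cubeA !mxE !enum_rankK (negbTE uv) mulr0 add0r subr0 mulr1.
have dxx : hdist x x = 0%N by rewrite /hdist eq_card0 // => j; rewrite inE eqxx.
have dxy : hdist x y = 3%N.
  by rewrite /hdist eq_cardT -?cardE ?card_ord // => j; rewrite inE !ffunE.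
have diag : 3 * (q%:R - 1) * (q%:R - 2) = al.
  rewrite -(entry_al x x) ?dxx // (@hamA31_cube_const q _ _ true) // => k.
  by rewrite !enum_rankK eqxx.
have antipodal : 6 = al.
  rewrite -(entry_al x y) ?dxy // (@hamA31_cube_const q _ _ false) // => k.
  by rewrite !enum_rankK !ffunE.
have : 3 * ((q%:R - 3) * q%:R) = 0 :> rat.
  by rewrite -(subrr al) -{1}diag -antipodal; ring.
move/eqP; rewrite !mulf_eq0 subr_eq0 (eqr_nat _ q 3) !pnatr_eq0 /=.
case/orP=> [/eqP // | /eqP q0].
by have := q_ge2; rewrite q0.
Qed.

(* Vertices of H(3,3) are encoded as triples of naturals so that the checks
   below evaluate by vm_compute. *)
Definition triple := (nat * nat * nat)%type.

Definition coords (x : hvert 3 3) : triple :=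
  (x (@Ordinal 3 0 isT) : nat, x (@Ordinal 3 1 isT) : nat, x (@Ordinal 3 2 isT) : nat).

Definition tdist (t u : triple) : nat :=
  ((t.1.1 != u.1.1) + (t.1.2 != u.1.2) + (t.2 != u.2))%N.

Definition all_triples : seq triple :=
  flatten [seq [seq (a, b, c) | b <- iota 0 3, c <- iota 0 3] | a <- iota 0 3].

Lemma tdist_sym t u : tdist t u = tdist u t.
Proof.
by case: t u => [[a b] c] [[a' b'] c']; rewrite /tdist /= (eq_sym a) (eq_sym b) (eq_sym c).
Qed.

Lemma tdist_eq0 t u : (tdist t u == 0%N) = (t == u).
Proof.
by case: t u => [[a b] c] [[a' b'] c']; rewrite /tdist !xpair_eqE !addn_eq0 !eqb0 !negbK.
Qed.

Lemma hdist_coords (x y : hvert 3 3) : hdist x y = tdist (coords x) (coords y).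
Proof.
rewrite /hdist -sum1_card big_mkcond /= !big_ord_recl big_ord0 !inE addn0 addnA.
by congr (_ + _ + _); rewrite /=; congr (nat_of_bool (x _ != y _)); apply: val_inj.
Qed.

Lemma coords_inj : injective coords.
Proof.
move=> x y [x0 x1 x2]; apply/ffunP => -[[|[|[|//]]] j3];
  by apply: val_inj; rewrite (bool_irrelevance j3 isT).
Qed.

Lemma coords_mem x : coords x \in all_triples.
Proof.
rewrite /coords.
by case: (x _) (x _) (x _) => [[|[|[|//]]] ?] [[|[|[|//]]] ?] [[|[|[|//]]] ?].
Qed.

Lemma perm_coords_all_triples :
  perm_eq [seq coords x | x <- enum (hvert 3 3)] all_triples.
Proof.
have uniq_coords : uniq [seq coords x | x <- enum (hvert 3 3)].
  by rewrite map_inj_uniq ?enum_uniq //; apply: coords_inj.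
apply: uniq_perm => //; apply: (uniq_min_size uniq_coords _ _).2.
- by move=> _ /mapP [x _ ->]; apply: coords_mem.
by rewrite size_map -cardE card_ffun !card_ord.
Qed.

Lemma sum_coords (G : triple -> nat) :
  (\sum_(x : hvert 3 3) G (coords x))%N = sumn [seq G t | t <- all_triples].
Proof.
by rewrite sumnE big_map -(perm_big _ perm_coords_all_triples) big_map big_enum.
Qed.

Definition dist_in_mx (D : seq nat) : 'M[rat]_#|hvert 3 3| :=
  \matrix_(a, b) (tdist (coords (enum_val a)) (coords (enum_val b)) \in D)%:R.

Definition walks3_count (D : seq nat) (t u : triple) : nat :=
  sumn [seq sumn [seq ((tdist t c \in D) * (tdist c z \in D))%N | c <- all_triples]
            * (tdist z u \in D) | z <- all_triples].

Definition cube_check (D : seq nat) (al be : nat) : bool :=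
  all (fun t => all (fun u =>
    walks3_count D t u == if tdist t u \in D then be else al) all_triples) all_triples.

Definition degree_check (D : seq nat) (k : nat) : bool :=
  all (fun t => sumn [seq nat_of_bool (tdist t u \in D) | u <- all_triples] == k)
    all_triples.

Lemma dist_in_mx_cubeE D a b :
  (dist_in_mx D *m dist_in_mx D *m dist_in_mx D) a b
  = (walks3_count D (coords (enum_val a)) (coords (enum_val b)))%:R.
Proof.
rewrite (@mulmx3E 3 3 rat (fun x y => (tdist (coords x) (coords y) \in D)%:R)); last first.
  by move=> ? ?; rewrite mxE.
rewrite /walks3_count -sum_coords natr_sum; apply: eq_bigr => z _.
rewrite -sum_coords natrM natr_sum; congr (_ * _).
by apply: eq_bigr => c _; rewrite natrM.
Qed.

Lemma dist_in_mx_cube D al be : cube_check D al be ->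
  dist_in_mx D *m dist_in_mx D *m dist_in_mx D
  = be%:R *: dist_in_mx D + al%:R *: (Jmx _ - dist_in_mx D).
Proof.
move=> /allP check; apply/matrixP => a b.
move: (check _ (coords_mem (enum_val a))) => /allP /(_ _ (coords_mem (enum_val b))) /eqP.
rewrite dist_in_mx_cubeE !mxE => ->.
by case: (_ \in D); rewrite /= ?mulr1 ?mulr0 ?subrr ?subr0 ?addr0 ?add0r.
Qed.

Lemma dist_in_mx_sym_pgd D k al be : cube_check D al be -> degree_check D k ->
  sym_pgd (dist_in_mx D) k al%:R be%:R.
Proof.
move=> cube /allP degree.
have row_sum a : \sum_b dist_in_mx D a b = k%:R.
  under eq_bigr do rewrite mxE.
  rewrite (@sum_enum_val 3 3 rat (fun y => (tdist (coords (enum_val a)) (coords y) \in D)%:R)).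
  by rewrite -natr_sum -(eqP (degree _ (coords_mem (enum_val a)))) -sum_coords.
have sym : (dist_in_mx D)^T = dist_in_mx D.
  by apply/matrixP => a b; rewrite !mxE tdist_sym.
split=> [a b | a | b | ].
- by rewrite mxE; case: (_ \in D); [right | left].
- exact: row_sum.
- by rewrite -sym; under eq_bigr do rewrite mxE; apply: row_sum.
by rewrite sym; exact: dist_in_mx_cube cube.
Qed.

Lemma hamA33E i : hamA 3 3 i = dist_in_mx [:: i].
Proof. by apply/matrixP => a b; rewrite !mxE hdist_coords inE. Qed.

Lemma hamA333_add1 : hamA 3 3 3 + 1%:M = dist_in_mx [:: 3; 0]%N.
Proof.
apply/matrixP => a b; rewrite !mxE hdist_coords !inE -(inj_eq enum_val_inj).
rewrite -(inj_eq coords_inj) -tdist_eq0.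
by case: (tdist _ _) => [|[|[|[|n]]]]; rewrite ?addr0 ?add0r.
Qed.

Lemma dist1_checks : cube_check [:: 1] 6 15 /\ degree_check [:: 1] 6.
Proof. by split; vm_compute. Qed.

Lemma dist2_checks : cube_check [:: 2] 60 69 /\ degree_check [:: 2] 12.
Proof. by split; vm_compute. Qed.

Lemma dist3_or_0_checks : cube_check [:: 3; 0] 24 33 /\ degree_check [:: 3; 0] 9.
Proof. by split; vm_compute. Qed.

Theorem proposition6p1 :
  (forall q : nat, (2 <= q)%N ->
     ((exists alpha beta : rat,
         hamA 3 q 1 *m hamA 3 q 1 *m hamA 3 q 1
         = beta *: hamA 3 q 1 + alpha *: (Jmx _ - hamA 3 q 1))
      <-> q = 3%N)) /\
  [/\ hamA 3 3 1 *m hamA 3 3 1 *m hamA 3 3 1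
        = 15%:R *: hamA 3 3 1 + 6%:R *: (Jmx _ - hamA 3 3 1),
      hamA 3 3 2 *m hamA 3 3 2 *m hamA 3 3 2
        = 69%:R *: hamA 3 3 2 + 60%:R *: (Jmx _ - hamA 3 3 2) &
      (hamA 3 3 3 + 1%:M) *m (hamA 3 3 3 + 1%:M) *m (hamA 3 3 3 + 1%:M)
        = 33%:R *: (hamA 3 3 3 + 1%:M)
          + 24%:R *: (Jmx _ - hamA 3 3 3 - 1%:M)] /\
  [/\ sym_pgd (hamA 3 3 1) 6 6%:R 15%:R,
      sym_pgd (hamA 3 3 2) 12 60%:R 69%:R &
      sym_pgd (hamA 3 3 3 + 1%:M) 9 24%:R 33%:R].
Proof.
have [cube1 degree1] := dist1_checks.
have [cube2 degree2] := dist2_checks.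
have [cube3 degree3] := dist3_or_0_checks.
have J_subD : Jmx _ - hamA 3 3 3 - 1%:M = Jmx _ - (hamA 3 3 3 + 1%:M).
  by rewrite opprD addrA.
rewrite J_subD hamA333_add1 !hamA33E.
split; [move=> q q_ge2; split; [exact: hamA31_cube_pgd_q3 | move=> ->] |].
  by rewrite hamA33E; exists 6%:R, 15%:R; apply: dist_in_mx_cube cube1.
split; split.
- exact: dist_in_mx_cube cube1.
- exact: dist_in_mx_cube cube2.
- exact: dist_in_mx_cube cube3.
- exact: dist_in_mx_sym_pgd cube1 degree1.
- exact: dist_in_mx_sym_pgd cube2 degree2.
- exact: dist_in_mx_sym_pgd cube3 degree3.
Qed.
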